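(* Let $q\ge0$, let $(\varepsilon_t)_{t\in\mathbb Z}$ be i.i.d. real random variables with a continuous distribution, and let $X_t=\sum_{l=0}^q\varepsilon_{t-l}$ (MA($q$) process with equal weights). For OPs of length $m=2$, the long-run covariance matrix is $$\Sigma=\frac1{12}\begin{pmatrix}1&-1\\-1&1\end{pmatrix},$$ independently of $q$ and of the distribution of $\varepsilon_t$.
   Context: For $m=2$ the OPs are $\pi_1=(1,2)$ (i.e. $X_t<X_{t+1}$) and $\pi_2=(2,1)$ (i.e. $X_t>X_{t+1}$); $\Pi_t$ is the OP of $(X_t,X_{t+1})$, $p_i=\mathbb P(\Pi_0=\pi_i)$, $p_{ij}(k)=\mathbb P(\Pi_0=\pi_i,\Pi_k=\pi_j)$, and the long-run covariance matrix is $\Sigma=(\sigma_{ij})$ with $\sigma_{ij}=p_i(\delta_{ij}-p_j)+\sum_{k=1}^\infty\big(p_{ij}(k)+p_{ji}(k)-2p_ip_j\big)$, $\delta_{ij}$ the Kronecker delta. *)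

From HB Require Import structures.
From mathcomp Require Import all_boot all_order all_algebra.
From mathcomp Require Import all_classical all_reals all_analysis.
Set Implicit Arguments. Unset Strict Implicit. Unset Printing Implicit Defensive.
Import Order.TTheory GRing.Theory Num.Theory.
Local Open Scope classical_set_scope.
Local Open Scope ring_scope.

Section Defs.
Context (d : measure_display) (T : measurableType d) (R : realType)
  (P : probability T R).

Definition mutually_independent (eps : int -> {RV P >-> R}) : Prop :=
  forall (I : seq int) (B : int -> set R), uniq I ->
    (forall i, i \in I -> measurable (B i)) ->
    P (\bigcap_(i in [set` I]) (eps i @^-1` B i)) =
    (\prod_(i <- I) P (eps i @^-1` B i))%E.

Definition identically_distributed (eps : int -> {RV P >-> R}) : Prop :=
  forall (t : int) (B : set R), measurable B ->
    P (eps t @^-1` B) = P (eps 0 @^-1` B).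

Definition continuous_law (Y : {RV P >-> R}) : Prop :=
  forall x : R, P (Y @^-1` [set x]) = 0%E.

Definition iid_continuous (eps : int -> {RV P >-> R}) : Prop :=
  [/\ mutually_independent eps, identically_distributed eps &
      continuous_law (eps 0)].

Definition MAeq (eps : int -> {RV P >-> R}) (q : nat) (t : int) : T -> R :=
  fun w => \sum_(0 <= l < q.+1) eps (t - l%:Z) w.

(* Ordinal patterns of length 2: index 0 is pi_1 = (1,2) (X_t < X_{t+1}),
   index 1 is pi_2 = (2,1) (X_t > X_{t+1}).
   OPevent X t i = the event {Pi_t = pi_i}. *)
Definition OPevent (X : int -> T -> R) (t : int) (i : 'I_2) : set T :=
  if i == ord0 then [set w | X t w < X (t + 1) w]
  else [set w | X (t + 1) w < X t w].

Definition p_ (X : int -> T -> R) (i : 'I_2) : R :=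
  fine (P (OPevent X 0 i)).

Definition p2_ (X : int -> T -> R) (i j : 'I_2) (k : nat) : R :=
  fine (P (OPevent X 0 i `&` OPevent X k%:Z j)).

Definition sigma_partial (X : int -> T -> R) (i j : 'I_2) (n : nat) : R :=
  p_ X i * ((i == j)%:R - p_ X j) +
  \sum_(1 <= k < n.+1) (p2_ X i j k + p2_ X j i k - 2 * p_ X i * p_ X j).

End Defs.

Definition Sigma_claim (R : realType) (i j : 'I_2) : R :=
  (if i == j then 1 else -1) / 12.

From HB Require Import structures.
From mathcomp Require Import all_boot all_order all_algebra.
From mathcomp Require Import all_classical all_reals all_analysis.
From mathcomp Require Import ring lra zify.
Import Order.TTheory GRing.Theory Num.Theory.
Local Open Scope classical_set_scope.
Local Open Scope ring_scope.

(* The increments of the equal-weight MA(q) process telescope: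
   X_{t+1} - X_t = eps_{t+1} - eps_{t-q}, so the pattern Pi_t only records
   whether eps_{t-q} < eps_{t+1}.  For k <> q+1 the events {Pi_0 = .} and
   {Pi_k = .} involve four distinct innovations and are independent, so the
   k-th term of the covariance series vanishes.  For k = q+1 they share the
   innovation eps_1, and exchangeability of (eps_{-q}, eps_1, eps_{q+2})
   gives p_ij(q+1) = 1/6 if i = j and 1/3 otherwise, hence the only
   non-zero term is -1/6 or +1/6, while p_i (delta_ij - p_j) = +-1/4. *)

Definition rectangles {T1 T2 : Type} (G1 : set (set T1)) (G2 : set (set T2)) :
    set (set (T1 * T2)) :=
  [set A `*` B | A in G1 & B in G2].

Lemma rectangles_setT {T1 T2 : Type} {G1 : set (set T1)} {G2 : set (set T2)} :
  G1 setT -> G2 setT -> rectangles G1 G2 setT.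
Proof. by move=> G1T G2T; rewrite -setXTT; exists setT => //; exists setT. Qed.

Lemma setI_closed_rectangles {T1 T2 : Type}
    {G1 : set (set T1)} {G2 : set (set T2)} :
  setI_closed G1 -> setI_closed G2 -> setI_closed (rectangles G1 G2).
Proof.
move=> G1I G2I _ _ [A GA [B GB <-]] [A' GA' [B' GB' <-]]; rewrite -setXI.
by exists (A `&` A'); [exact: G1I|exists (B `&` B'); [exact: G2I|]].
Qed.

Lemma setSD_closed_g_sigma (T : Type) (G : set (set T)) : setSD_closed <<s G >>.
Proof.
have [] // := (sigma_algebraP (fun _ _ => @subsetT _ _)).1
  (smallest_sigma_algebra setT G).
Qed.

Section measurable_rectangles.
Context {d1 d2 : measure_display}.
Context {T1 : measurableType d1} {T2 : measurableType d2}.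
Context {G : set (set T1)}.
Hypotheses (measurableG : measurable = <<s G >>) (GT : G setT).

Lemma measurable_prod_rectangles :
  @measurable _ (T1 * T2)%type = <<s rectangles G measurable >>.
Proof.
rewrite measurable_prod_measurableType; apply/seteqP; split; last first.
  apply: smallest_sub; first exact: smallest_sigma_algebra.
  move=> _ [A GA [B mB <-]]; apply: sub_sigma_algebra.
  by exists A; [rewrite measurableG; exact: sub_sigma_algebra|exists B].
apply: smallest_sub; first exact: smallest_sigma_algebra.
move=> _ [A mA [B mB <-]].
suff : <<s G >> `<=` [set C | <<s rectangles G measurable >> (C `*` B)].
  by apply; rewrite -measurableG.
apply: smallest_sub; last first.
  by move=> C GC; apply: sub_sigma_algebra; exists C => //; exists B.
split => [|C sC|F sF] /=.
- by rewrite set0X; exact: sigma_algebra0.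
- have -> : (setT `\` C) `*` B = (setT `*` B) `\` (C `*` B).
    apply/seteqP; split => -[x y] /=; first by move=> [[_ nCx] By]; split=> // -[].
    by move=> [[_ By] nCB]; split=> //; split=> // Cx; exact: nCB.
  apply: setSD_closed_g_sigma => //; first exact: setSX.
  by apply: sub_sigma_algebra; exists setT => //; exists B.
- by rewrite setX_bigcupl; exact: sigma_algebra_bigcup.
Qed.

Lemma measure_prod_unique {R : realType}
    (m1 m2 : {measure set (T1 * T2) -> \bar R}) :
  setI_closed G -> (m1 setT < +oo)%E ->
  (forall A B, G A -> measurable B -> m1 (A `*` B) = m2 (A `*` B)) ->
  forall X, measurable X -> m1 X = m2 X.
Proof.
move=> GI m1T m12 X mX.
apply: (measure_unique (rectangles G measurable) (fun=> setT)) => //.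
- exact: measurable_prod_rectangles.
- by apply: setI_closed_rectangles => // ? ?; exact: measurableI.
- by move=> _; exact: rectangles_setT.
- by rewrite bigcup_const.
- by move=> _ [A GA [B mB <-]]; exact: m12.
Qed.

End measurable_rectangles.

Lemma measurable_ltr_set d (T : measurableType d) (R : realType) (f g : T -> R) :
  measurable_fun setT f -> measurable_fun setT g -> measurable [set x | f x < g x].
Proof.
move=> mf mg.
have := measurable_realfun.measurable_fun_ltr mf mg measurableT (Y := [set true]) I.
by rewrite setTI.
Qed.

Lemma measurable_eqr_set d (T : measurableType d) (R : realType) (f g : T -> R) :
  measurable_fun setT f -> measurable_fun setT g -> measurable [set x | f x = g x].
Proof.
move=> mf mg.
have := measurable_realfun.measurable_fun_eqr mf mg measurableT (Y := [set true]) I.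
by rewrite setTI; congr measurable; apply/seteqP; split => x /= /eqP.
Qed.

Lemma sum_nat_pred1 (V : zmodType) (m n : nat) (s : V) : (0 < m)%N ->
  \sum_(1 <= k < n.+1) (if k == m then s else 0) = if (m <= n)%N then s else 0.
Proof.
move=> m_gt0; elim: n => [|n IHn]; first by rewrite big_geq // leqNgt m_gt0.
rewrite big_nat_recr //= IHn.
have [mn|nm|->] := ltngtP m n.+1.
- by rewrite -ltnS mn addr0.
- by rewrite leqNgt (ltn_trans (ltnSn n) nm) addr0.
- by rewrite ltnn add0r.
Qed.

Section iid_sequence.
Context d (T : measurableType d) (R : realType) (P : probability T R)
  (eps : int -> {RV P >-> R}).
Hypotheses (eps_indep : mutually_independent eps)
  (eps_id : identically_distributed eps).

Local Notation mu := (distribution P (eps 0)).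

Lemma prob_bigcap_preimage (s : seq int) (B : int -> set R) : uniq s ->
  (forall i, measurable (B i)) ->
  P (\big[setI/setT]_(i <- s) eps i @^-1` B i) = (\prod_(i <- s) mu (B i))%E.
Proof.
move=> s_uniq mB; rewrite -bigcap_seq eps_indep //.
by apply: eq_bigr => i _; exact: eps_id.
Qed.

Definition eps2 (a b : int) : T -> R * R := fun w => (eps a w, eps b w).
Definition eps3 (a b c : int) : T -> R * R * R := fun w => (eps2 a b w, eps c w).
Definition eps4 (a b c e : int) : T -> R * R * R * R :=
  fun w => (eps3 a b c w, eps e w).

Lemma measurable_eps2 a b : measurable_fun setT (eps2 a b).
Proof. exact: measurable_fun_pair. Qed.
HB.instance Definition _ a b :=
  isMeasurableFun.Build _ _ _ _ (eps2 a b) (measurable_eps2 a b).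

Lemma measurable_eps3 a b c : measurable_fun setT (eps3 a b c).
Proof. exact: measurable_fun_pair (measurable_eps2 a b) _. Qed.
HB.instance Definition _ a b c :=
  isMeasurableFun.Build _ _ _ _ (eps3 a b c) (measurable_eps3 a b c).

Lemma measurable_eps4 a b c e : measurable_fun setT (eps4 a b c e).
Proof. exact: measurable_fun_pair (measurable_eps3 a b c) _. Qed.
HB.instance Definition _ a b c e :=
  isMeasurableFun.Build _ _ _ _ (eps4 a b c e) (measurable_eps4 a b c e).

Lemma distribution_eps2X a b A B : a != b -> measurable A -> measurable B ->
  distribution P (eps2 a b) (A `*` B) = (mu A * mu B)%E.
Proof.
move=> ab mA mB; pose S i := if i == a then A else B.
have mS i : measurable (S i) by rewrite /S; case: ifP.
have := prob_bigcap_preimage [:: a; b] S; rewrite /= inE ab => /(_ isT mS).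
rewrite !big_cons !big_nil setIT mule1 /S eqxx eq_sym (negbTE ab).
by move=> <-; congr (P _); apply/seteqP; split => w [].
Qed.

Lemma distribution_eps3X a b c A B C : uniq [:: a; b; c] ->
  measurable A -> measurable B -> measurable C ->
  distribution P (eps3 a b c) (A `*` B `*` C) = (mu A * mu B * mu C)%E.
Proof.
rewrite /= !inE !negb_or => /and3P[/andP[ab ac] bc _] mA mB mC.
pose S i := if i == a then A else if i == b then B else C.
have mS i : measurable (S i) by rewrite /S; case: ifP => _ //; case: ifP.
have := prob_bigcap_preimage [:: a; b; c] S.
rewrite /= !inE !negb_or ab ac bc => /(_ isT mS).
rewrite !big_cons !big_nil setIT mule1 /S eqxx !(eq_sym _ a).
rewrite (negbTE ab) (negbTE ac) eqxx eq_sym (negbTE bc) muleA.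
by move=> <-; congr (P _); apply/seteqP; split => w /=; tauto.
Qed.

Lemma distribution_eps4X a b c e A B C E : uniq [:: a; b; c; e] ->
  measurable A -> measurable B -> measurable C -> measurable E ->
  distribution P (eps4 a b c e) (A `*` B `*` C `*` E) =
  (mu A * mu B * mu C * mu E)%E.
Proof.
rewrite /= !inE !negb_or => /and4P[/and3P[ab ac ae] /andP[bc be] ce _].
move=> mA mB mC mE.
pose S i := if i == a then A else if i == b then B else if i == c then C else E.
have mS i : measurable (S i).
  by rewrite /S; case: ifP => _ //; case: ifP => _ //; case: ifP.
have := prob_bigcap_preimage [:: a; b; c; e] S.
rewrite /= !inE !negb_or ab ac ae bc be ce => /(_ isT mS).
rewrite !big_cons !big_nil setIT mule1 /S eqxx !(eq_sym _ a).
rewrite (negbTE ab) (negbTE ac) (negbTE ae) eqxx !(eq_sym _ b) (negbTE bc).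
rewrite (negbTE be) eqxx eq_sym (negbTE ce) !muleA.
by move=> <-; congr (P _); apply/seteqP; split => w /=; tauto.
Qed.

Let measurable_R : @measurable _ R = <<s measurable >>.
Proof. by rewrite sigma_algebra_id //; exact: sigma_algebra_measurable. Qed.

Let measurable_R2 : @measurable _ (R * R)%type =
  <<s rectangles measurable measurable >>.
Proof. exact: measurable_prod_rectangles measurable_R measurableT. Qed.

Let measurable_R3 : @measurable _ (R * R * R)%type =
  <<s rectangles (rectangles measurable measurable) measurable >>.
Proof.
exact: measurable_prod_rectangles measurable_R2
  (rectangles_setT measurableT measurableT).
Qed.

Let distribution_setT_lty d' (U : measurableType d') (X : {mfun T >-> U}) :
  (distribution P X setT < +oo)%E.
Proof. by rewrite probability_setT ltry. Qed.

Lemma distribution_eps2_exchange a b a' b' : a != b -> a' != b' ->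
  forall X, measurable X ->
  distribution P (eps2 a b) X = distribution P (eps2 a' b') X.
Proof.
move=> ab ab'; apply: (measure_prod_unique measurable_R measurableT).
- exact: measurableI.
- exact: distribution_setT_lty.
- move=> A B mA mB; transitivity (mu A * mu B)%E; first exact: distribution_eps2X.
  by symmetry; exact: distribution_eps2X.
Qed.

Lemma distribution_eps3_exchange a b c a' b' c' :
  uniq [:: a; b; c] -> uniq [:: a'; b'; c'] -> forall X, measurable X ->
  distribution P (eps3 a b c) X = distribution P (eps3 a' b' c') X.
Proof.
move=> abc abc'.
apply: (measure_prod_unique measurable_R2
  (rectangles_setT measurableT measurableT)).
- exact: setI_closed_rectangles measurableI measurableI.
- exact: distribution_setT_lty.
- move=> _ C [A mA [B mB <-]] mC; transitivity (mu A * mu B * mu C)%E.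
    exact: distribution_eps3X.
  by symmetry; exact: distribution_eps3X.
Qed.

Lemma distribution_eps4_exchange a b c e a' b' c' e' :
  uniq [:: a; b; c; e] -> uniq [:: a'; b'; c'; e'] -> forall X, measurable X ->
  distribution P (eps4 a b c e) X = distribution P (eps4 a' b' c' e') X.
Proof.
move=> abce abce'; apply: (measure_prod_unique measurable_R3).
- exact: rectangles_setT (rectangles_setT measurableT measurableT) measurableT.
- exact: setI_closed_rectangles (setI_closed_rectangles measurableI measurableI)
    measurableI.
- exact: distribution_setT_lty.
- move=> _ E [_ [A mA [B mB <-]] [C mC <-]] mE.
  transitivity (mu A * mu B * mu C * mu E)%E; first exact: distribution_eps4X.
  by symmetry; exact: distribution_eps4X.
Qed.

Hypothesis eps0_continuous : continuous_law (eps 0).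

Lemma prob_eps_eq a b : a != b -> P [set w | eps a w = eps b w] = 0%E.
Proof.
move=> ab; pose D := [set p : R * R | p.1 = p.2].
have mD : measurable D by apply: measurable_eqr_set.
change (distribution P (eps2 a b) D = 0%E).
(* the law of (eps a, eps b) is mu \x mu, which charges D by the atoms of mu *)
rewrite -(product_measure_unique
  (fun A B mA mB => distribution_eps2X a b A B ab mA mB)) //.
rewrite /product_measure1 (_ : mu \o xsection D = cst 0%E) ?integral0 //.
apply/funext => x /=; rewrite -(eps0_continuous x); congr mu.
by apply/seteqP; split => y; rewrite /xsection /= inE.
Qed.

Local Notation pr E := (fine (P E)).
Local Notation lt_event a b := [set w | eps a w < eps b w].

Lemma measurable_lt_event a b : measurable (lt_event a b).
Proof. by apply: measurable_ltr_set; exact: measurable_funPT. Qed.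

Lemma prob_split_lt {A : set T} {b c : int} : measurable A -> b != c ->
  pr A = pr (A `&` lt_event b c) + pr (A `&` lt_event c b).
Proof.
move=> mA bc; pose tie := [set w | eps b w = eps c w].
have mtie : measurable tie by apply: measurable_eqr_set; exact: measurable_funPT.
have mAbc := measurableI _ _ mA (measurable_lt_event b c).
have mAcb := measurableI _ _ mA (measurable_lt_event c b).
have mAtie := measurableI _ _ mA mtie.
have A_split : A = (A `&` lt_event b c `|` A `&` lt_event c b) `|` A `&` tie.
  apply/seteqP; split => [w Aw|w [[[]|[]]|[]]//].
  by case: (ltgtP (eps b w) (eps c w)); [left; left|left; right|right].
have lt_disj : A `&` lt_event b c `&` (A `&` lt_event c b) = set0.
  apply/seteqP; split => // w [[_ /= lt_bc] [_ /= lt_cb]].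
  by have := lt_trans lt_bc lt_cb; rewrite ltxx.
have tie_disj : (A `&` lt_event b c `|` A `&` lt_event c b) `&` (A `&` tie) = set0.
  apply/seteqP; split => // w [[[_ /= lt_bc]|[_ /= lt_cb]] [_ /= eq_bc]].
  + by rewrite eq_bc ltxx in lt_bc.
  + by rewrite eq_bc ltxx in lt_cb.
rewrite {1}A_split !measureU //; last exact: measurableU.
rewrite (@subset_measure0 _ _ _ P (A `&` tie) tie) ?adde0 //; last first.
  exact: prob_eps_eq.
by rewrite fineD //; exact: fin_num_measure.
Qed.

Let lt_pair := [set p : R * R | p.1 < p.2].
Let measurable_lt_pair : measurable lt_pair.
Proof. exact: measurable_ltr_set. Qed.

Let max_of_three := [set p : R * R * R | p.1.1 < p.1.2 /\ p.2 < p.1.2].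
Let measurable_max_of_three : measurable max_of_three.
Proof.
apply: measurableI; apply: measurable_ltr_set => //.
- exact: measurableT_comp.
- exact: measurableT_comp.
- exact: measurableT_comp.
Qed.

Let lt_two_pairs := [set p : R * R * R * R | p.1.1.1 < p.1.1.2 /\ p.1.2 < p.2].
Let measurable_lt_two_pairs : measurable lt_two_pairs.
Proof.
apply: measurableI; apply: measurable_ltr_set => //.
- by apply: measurableT_comp => //; exact: measurableT_comp.
- by apply: measurableT_comp => //; exact: measurableT_comp.
- exact: measurableT_comp.
Qed.

Lemma prob_lt_event a b : a != b -> pr (lt_event a b) = 1 / 2.
Proof.
move=> ab; have := prob_split_lt measurableT ab.
rewrite probability_setT !setTI.
have -> : pr (lt_event b a) = pr (lt_event a b).
  congr fine; change (distribution P (eps2 b a) lt_pair =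
                      distribution P (eps2 a b) lt_pair).
  by apply: distribution_eps2_exchange; rewrite // eq_sym.
by rewrite /=; lra.
Qed.

Lemma prob_max_of_three a b c : uniq [:: a; b; c] ->
  pr (lt_event a b `&` lt_event c b) = 1 / 3.
Proof.
(* up to ties, exactly one of a, b, c carries the maximum, and by
   exchangeability each does so with the same probability *)
rewrite /= !inE => abc.
have ab : a != b by lia.
have ca : c != a by lia.
have cb : c != b by lia.
have := prob_split_lt measurableT ab; rewrite probability_setT !setTI /=.
have := prob_split_lt (measurable_lt_event a b) cb.
have := prob_split_lt (measurable_lt_event b a) ca.
have := prob_split_lt
  (measurableI _ _ (measurable_lt_event a c) (measurable_lt_event b c)) ab.
have -> : lt_event a c `&` lt_event b c `&` lt_event a b =
          lt_event a b `&` lt_event b c.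
  by apply/seteqP; split => w /= [] => [[]|] // lt_ab lt_bc; do !split => //;
    exact: lt_trans lt_bc.
have -> : lt_event a c `&` lt_event b c `&` lt_event b a =
          lt_event b a `&` lt_event a c.
  by apply/seteqP; split => w /= [] => [[]|] // lt_ba lt_ac; do !split => //;
    exact: lt_trans lt_ac.
have -> : pr (lt_event b a `&` lt_event c a) = pr (lt_event a b `&` lt_event c b).
  congr fine; change (distribution P (eps3 b a c) max_of_three =
                      distribution P (eps3 a b c) max_of_three).
  by apply: distribution_eps3_exchange => //; rewrite /= !inE; lia.
have -> : pr (lt_event a c `&` lt_event b c) = pr (lt_event a b `&` lt_event c b).
  congr fine; change (distribution P (eps3 a c b) max_of_three =
                      distribution P (eps3 a b c) max_of_three).
  by apply: distribution_eps3_exchange => //; rewrite /= !inE; lia.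
lra.
Qed.

Lemma prob_lt_chain a b c : uniq [:: a; b; c] ->
  pr (lt_event a b `&` lt_event b c) = 1 / 6.
Proof.
move=> abc; have cb : c != b by move: abc; rewrite /= !inE; lia.
have := prob_split_lt (measurable_lt_event a b) cb.
rewrite prob_lt_event ?prob_max_of_three //; first lra.
by move: abc; rewrite /= !inE; lia.
Qed.

Lemma prob_min_of_three a b c : uniq [:: a; b; c] ->
  pr (lt_event b a `&` lt_event b c) = 1 / 3.
Proof.
rewrite /= !inE => abc; have cb : c != b by lia.
have := prob_split_lt (measurable_lt_event b a) cb.
rewrite prob_lt_event; last by lia.
rewrite [lt_event b a `&` lt_event c b]setIC prob_lt_chain; first lra.
by rewrite /= !inE; lia.
Qed.

Lemma prob_lt_events_disjoint a b c e : uniq [:: a; b; c; e] ->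
  pr (lt_event a b `&` lt_event c e) = 1 / 4.
Proof.
rewrite /= !inE => abce.
have ab : a != b by lia.
have ce : c != e by lia.
have := prob_split_lt measurableT ab; rewrite probability_setT !setTI /=.
have := prob_split_lt (measurable_lt_event a b) ce.
have := prob_split_lt (measurable_lt_event b a) ce.
have exchange a' b' c' e' : uniq [:: a'; b'; c'; e'] ->
    pr (lt_event a' b' `&` lt_event c' e') = pr (lt_event a b `&` lt_event c e).
  move=> abce'; congr fine.
  change (distribution P (eps4 a' b' c' e') lt_two_pairs =
          distribution P (eps4 a b c e) lt_two_pairs).
  by apply: distribution_eps4_exchange => //; rewrite /= !inE; lia.
rewrite (exchange b a c e) ?(exchange a b e c) ?(exchange b a e c); first lra.
all: by rewrite /= !inE; lia.
Qed.

Lemma MAeq_increment q t w :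
  MAeq eps q (t + 1) w - MAeq eps q t w = eps (t + 1) w - eps (t - q%:Z) w.
Proof.
rewrite /MAeq [X in X - _]big_nat_recl // [X in _ - X]big_nat_recr //=.
have -> : \sum_(0 <= l < q) eps (t + 1 - l.+1%:Z) w =
          \sum_(0 <= l < q) eps (t - l%:Z) w.
  by apply: eq_bigr => l _; congr (eps _ w); lia.
by rewrite subr0; ring.
Qed.

Lemma OPevent_MAeq q t (i : 'I_2) : OPevent (MAeq eps q) t i =
  if i == ord0 then lt_event (t - q%:Z) (t + 1) else lt_event (t + 1) (t - q%:Z).
Proof.
rewrite /OPevent; case: ifP => _; apply/funext => w /=.
- by rewrite -subr_gt0 MAeq_increment subr_gt0.
- by rewrite -subr_lt0 MAeq_increment subr_lt0.
Qed.

Lemma p_MAeq q (i : 'I_2) : p_ P (MAeq eps q) i = 1 / 2.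
Proof. by rewrite /p_ OPevent_MAeq; case: ifP => _; apply: prob_lt_event; lia. Qed.

Lemma p2_MAeq q (i j : 'I_2) (k : nat) : (0 < k)%N ->
  p2_ P (MAeq eps q) i j k =
  if k == q.+1 then (if i == j then 1 / 6 else 1 / 3) else 1 / 4.
Proof.
move=> k_gt0; rewrite /p2_ !OPevent_MAeq.
have [->|kq] := eqVneq k q.+1; last first.
  by case: ifP; case: ifP; rewrite prob_lt_events_disjoint //= !inE; lia.
have -> : (q.+1)%:Z - q%:Z = 0 + 1 by lia.
case: i => -[|[|//]] ?; case: j => -[|[|//]] ? /=.
- by rewrite prob_lt_chain //= !inE; lia.
- by rewrite prob_max_of_three //= !inE; lia.
- by rewrite prob_min_of_three //= !inE; lia.
- by rewrite setIC prob_lt_chain //= !inE; lia.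
Qed.

Lemma sigma_term_MAeq q (i j : 'I_2) (k : nat) : (0 < k)%N ->
  p2_ P (MAeq eps q) i j k + p2_ P (MAeq eps q) j i k
    - 2 * p_ P (MAeq eps q) i * p_ P (MAeq eps q) j =
  if k == q.+1 then (if i == j then - 1 / 6 else 1 / 6) else 0.
Proof.
move=> k_gt0; rewrite !p2_MAeq // !p_MAeq [j == i]eq_sym.
by case: (k == q.+1); case: (i == j); lra.
Qed.

End iid_sequence.

Theorem proposition3p1 (d : measure_display) (T : measurableType d)
  (R : realType) (P : probability T R) (eps : int -> {RV P >-> R}) (q : nat) :
  iid_continuous eps ->
  forall i j : 'I_2,
    sigma_partial P (MAeq eps q) i j n @[n --> \oo] --> (Sigma_claim R i j : R^o).
Proof.
move=> [eps_indep eps_id eps0_continuous] i j.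
apply: (@cvg_near_cst nat R^o); exists q.+1 => // n /= qn.
rewrite /sigma_partial.
under eq_big_nat => k /andP[k_gt0 _] do rewrite sigma_term_MAeq //.
rewrite sum_nat_pred1 // qn !p_MAeq // /Sigma_claim.
by case: (i == j) => /=; lra.
Qed.
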